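(* Under the hypotheses of the stable-fixed-point theorem (Assumptions (A1), (A2)), let $q^\ast\in\mathbb S^\circ$ satisfy $\nabla\ell(p,q^\ast|x)=\mathbf 1$, and let $$B=-\mathrm{diag}(q^\ast)\,\nabla^2\ell(p,q^\ast|x)=\frac1{2M}\sum_{m=1}^M\sum_{i=1}^I x_{im}\frac{\mathrm{diag}(q^\ast)\,p_{\cdot im}p_{\cdot im}^\top}{\langle q^\ast,p_{\cdot im}\rangle^2}.$$ Then $B$ has nonnegative entries, $\mathbf 1^\top B=\mathbf 1^\top$ (so $B^\top$ is a stochastic matrix), $Bq^\ast=q^\ast$, and all eigenvalues of $B$ are real and lie in $(0,1]$. Consequently the Jacobian $\nabla L(p,q^\ast|x)=E_K-B$ has all eigenvalues in $[0,1)$.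
   Context: $\mathbb S^\circ=\{q\in\mathbb R^K: q_k>0,\ \sum_kq_k=1\}$; $p\in\mathbb S_I^{K\times M}$ (each $p_{k\cdot m}=(p_{kim})_i$ a probability vector), $p_{\cdot im}=(p_{kim})_{k=1}^K$; $x\in\{0,1,2\}^{I\times M}$ with $\sum_ix_{im}=2$; $\mathbf 1=(1,\dots,1)^\top$; $E_K$ the identity matrix. $\ell(p,q|x)=\frac1{2M}\sum_m\big(\log\frac{2!}{\prod_ix_{im}!}+\sum_ix_{im}\log\langle q,p_{\cdot im}\rangle\big)$, with gradient $\nabla\ell(p,q|x)=\frac1{2M}\sum_{m,i}x_{im}\frac{p_{\cdot im}}{\langle q,p_{\cdot im}\rangle}$ and Hessian $\nabla^2\ell(p,q|x)=-\frac1{2M}\sum_{m,i}x_{im}\frac{p_{\cdot im}p_{\cdot im}^\top}{\langle q,p_{\cdot im}\rangle^2}$. $L(p,q|x)=\mathrm{diag}(q)\nabla\ell(p,q|x)$, whose Jacobian is $\mathrm{diag}(\nabla\ell(p,q|x))+\mathrm{diag}(q)\nabla^2\ell(p,q|x)$. Assumption (A1): whenever $x_{im}>0$ there is some $k$ with $p_{kim}>0$. Assumption (A2): for every $s\in\mathbb R^K\setminus\{0\}$ with $\langle s,\mathbf 1\rangle=0$ there exist $i,m$ with $x_{im}>0$ and $\langle s,p_{\cdot im}\rangle\neq0$. *)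

From HB Require Import structures.
From mathcomp Require Import all_boot all_order all_algebra.
From mathcomp Require Import complex.
Set Implicit Arguments. Unset Strict Implicit. Unset Printing Implicit Defensive.
Import Order.TTheory GRing.Theory Num.Theory.
Local Open Scope ring_scope.

Section Defs.
Variables (R : rcfType) (K I M : nat).

(* p k i m = p_{kim}; x i m = x_{im}; q : column vector in R^K *)
Definition pcol (p : 'I_K -> 'I_I -> 'I_M -> R) (i : 'I_I) (m : 'I_M) : 'cV[R]_K :=
  \col_k p k i m.

Definition inner (q v : 'cV[R]_K) : R := \sum_k q k 0 * v k 0.

Definition is_stoch_p (p : 'I_K -> 'I_I -> 'I_M -> R) : Prop :=
  (forall k i m, 0 <= p k i m) /\ (forall k m, \sum_i p k i m = 1).

Definition is_genotype (x : 'I_I -> 'I_M -> nat) : Prop :=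
  (forall i m, (x i m <= 2)%N) /\ (forall m, (\sum_i x i m)%N = 2%N).

Definition in_open_simplex (q : 'cV[R]_K) : Prop :=
  (forall k, 0 < q k 0) /\ \sum_k q k 0 = 1.

Definition grad_ell p (q : 'cV[R]_K) (x : 'I_I -> 'I_M -> nat) : 'cV[R]_K :=
  (2 * M%:R)^-1 *: \sum_m \sum_i
     ((x i m)%:R / inner q (pcol p i m)) *: pcol p i m.

Definition hess_ell p (q : 'cV[R]_K) (x : 'I_I -> 'I_M -> nat) : 'M[R]_K :=
  - ((2 * M%:R)^-1 *: \sum_m \sum_i
     ((x i m)%:R / (inner q (pcol p i m)) ^+ 2) *: (pcol p i m *m (pcol p i m)^T)).

(* Jacobian of L(p,q|x) = diag(q) grad ell *)
Definition jac_L p (q : 'cV[R]_K) x : 'M[R]_K :=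
  diag_mx (grad_ell p q x)^T + diag_mx q^T *m hess_ell p q x.

Definition Bmat p (q : 'cV[R]_K) x : 'M[R]_K := - (diag_mx q^T *m hess_ell p q x).

Definition assumption_A1 (p : 'I_K -> 'I_I -> 'I_M -> R) (x : 'I_I -> 'I_M -> nat) : Prop :=
  forall i m, (0 < x i m)%N -> exists k, 0 < p k i m.

Definition assumption_A2 (p : 'I_K -> 'I_I -> 'I_M -> R) (x : 'I_I -> 'I_M -> nat) : Prop :=
  forall s : 'cV[R]_K, s != 0 -> \sum_k s k 0 = 0 ->
    exists i m, (0 < x i m)%N /\ inner s (pcol p i m) != 0.

End Defs.

Definition cmx (R : rcfType) (n : nat) (A : 'M[R]_n) : 'M[R[i]]_n :=
  map_mx (fun r => (r%:C)%C) A.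

From HB Require Import structures.
From mathcomp Require Import all_boot all_order all_algebra.
From mathcomp Require Import complex.
From mathcomp Require Import ring.
Set Implicit Arguments. Unset Strict Implicit. Unset Printing Implicit Defensive.
Import Order.TTheory GRing.Theory Num.Theory.
Local Open Scope ring_scope.
Local Open Scope complex_scope.

(* B = diag(q) H with H = (2M)^-1 sum_{i,m} x_im / <q,p_im>^2 p_im p_im^T a nonnegative
   combination of rank-one Gram matrices.  For a left eigenvector v of B (over C),
   lam * sum_k q_k |v_k|^2 = sum_{i,m} w_im |<v q, p_im>|^2, so every eigenvalue is real
   and nonnegative.  If lam = 0, then u = v q is nonzero and orthogonal to every p_im
   with x_im > 0; as grad l = 1 writes the all-ones vector as a combination of these
   p_im, u also sums to 0, and (A2) applied to Re u and Im u forces u = 0.  Finally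
   grad l = 1 says that the columns of the nonnegative matrix B sum to 1, which bounds
   the modulus of its eigenvalues by 1; the Jacobian E_K - B has the shifted spectrum. *)

Section ComplexifiedEigenvalues.
Variables (R : rcfType) (n : nat).
Implicit Types (A : 'M[R]_n) (v : 'rV[R[i]]_n) (lam : R[i]).

Lemma conjC_real_complex (r : R) : (r%:C)^*%R = r%:C.
Proof. by rewrite conj_Creal // -complexr0 complex_real. Qed.

Lemma Re_sum_mul_real (z : 'I_n -> R[i]) (r : 'I_n -> R) :
  complex.Re (\sum_k z k * (r k)%:C) = \sum_k complex.Re (z k) * r k.
Proof.
rewrite (@raddf_sum _ _ (@complex.Re R)); apply: eq_bigr => k _.
by case: (z k) => a b /=; rewrite mulr0 subr0.
Qed.

Lemma Im_sum_mul_real (z : 'I_n -> R[i]) (r : 'I_n -> R) :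
  complex.Im (\sum_k z k * (r k)%:C) = \sum_k complex.Im (z k) * r k.
Proof.
rewrite (@raddf_sum _ _ (@complex.Im R)); apply: eq_bigr => k _.
by case: (z k) => a b /=; rewrite mulr0 add0r.
Qed.

Lemma cmxE A j k : cmx A j k = (A j k)%:C.
Proof. by rewrite mxE. Qed.

Lemma cmx_left_eigenE A v lam : v *m cmx A = lam *: v ->
  forall k, \sum_j v 0 j * (A j k)%:C = lam * v 0 k.
Proof.
move=> Av k; have := congr1 (fun u : 'rV_n => u 0 k) Av; rewrite !mxE => <-.
by apply: eq_bigr => j _; rewrite cmxE.
Qed.

Lemma eigenvalue_cmx_1subr A lam :
  eigenvalue (cmx (1%:M - A)) lam -> eigenvalue (cmx A) (1 - lam).
Proof.
case/eigenvalueP => v Av v_neq0; apply/eigenvalueP; exists v => //.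
by rewrite scalerBl scale1r -Av /cmx map_mxB map_mx1 mulmxBr mulmx1 opprB addrC subrK.
Qed.

(* A left eigenvector is compared with its entry of largest modulus. *)
Lemma eigenvalue_cmx_norm_le1 A lam :
  (forall j k, 0 <= A j k) -> (forall k, \sum_j A j k = 1) ->
  eigenvalue (cmx A) lam -> `|lam| <= 1.
Proof.
move=> A_ge0 A_colsum /eigenvalueP [v /cmx_left_eigenE Av /rV0Pn [k0 vk0_neq0]].
pose f k := Num.sqrt (complex.Re (v 0 k) ^+ 2 + complex.Im (v 0 k) ^+ 2).
have normvE k : `|v 0 k| = (f k)%:C by rewrite normc_def.
have [km _ km_max] := arg_maxP (i0 := k0) (P := xpredT) f isT.
have vkm_max j : `|v 0 j| <= `|v 0 km| by rewrite !normvE lecR; exact: km_max.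
have vkm_gt0 : 0 < `|v 0 km|.
  by apply: lt_le_trans (vkm_max k0); rewrite normr_gt0.
rewrite -(ler_pM2r vkm_gt0) mul1r -normrM -Av.
apply: le_trans (ler_norm_sum _ _ _) _.
apply: le_trans (_ : _ <= \sum_j `|v 0 km| * (A j km)%:C) _.
  apply: ler_sum => j _; rewrite normrM [`|(_)%:C|]ger0_norm ?ler0c //.
  by apply: ler_wpM2r; rewrite ?ler0c.
by rewrite -mulr_sumr -rmorph_sum A_colsum mulr1.
Qed.

End ComplexifiedEigenvalues.

Section ScaledGram.
Variables (R : rcfType) (n : nat) (T : finType).
Variables (d : 'I_n -> R) (w : T -> R) (c : T -> 'I_n -> R).

Definition scaled_gram : 'M[R]_n :=
  \matrix_(j, k) (d j * \sum_t w t * (c t j * c t k)).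

Lemma scaled_gram_ge0 j k :
  (forall j, 0 <= d j) -> (forall t, 0 <= w t) -> (forall t j, 0 <= c t j) ->
  0 <= scaled_gram j k.
Proof.
move=> d_ge0 w_ge0 c_ge0; rewrite mxE mulr_ge0 // sumr_ge0 // => t _.
by rewrite !mulr_ge0.
Qed.

Lemma scaled_gram_colsum k :
  \sum_j scaled_gram j k = \sum_t w t * (\sum_j d j * c t j) * c t k.
Proof.
under eq_bigr => j _ do rewrite mxE mulr_sumr.
rewrite exchange_big; apply: eq_bigr => t _.
by rewrite !mulr_sumr mulr_suml; apply: eq_bigr => j _; ring.
Qed.

Lemma scaled_gram_mul_d j :
  \sum_k scaled_gram j k * d k = d j * \sum_t w t * (\sum_k d k * c t k) * c t j.
Proof.
under eq_bigr => k _ do rewrite mxE -mulrA mulr_suml.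
rewrite -mulr_sumr exchange_big; congr (_ * _); apply: eq_bigr => t _.
by rewrite !mulr_sumr mulr_suml; apply: eq_bigr => k _; ring.
Qed.

Local Notation vdc v t := (\sum_j v 0 j * (d j)%:C * (c t j)%:C).

Lemma scaled_gram_left_eigen_quadratic (v : 'rV[R[i]]_n) lam :
  v *m cmx scaled_gram = lam *: v ->
  lam * \sum_k (d k)%:C * (v 0 k * (v 0 k)^*%R) =
  \sum_t (w t)%:C * (vdc v t * (vdc v t)^*%R).
Proof.
move=> /cmx_left_eigenE Av.
pose F t j k := (w t)%:C * (v 0 j * (d j)%:C * (c t j)%:C) *
                ((v 0 k)^*%R * (d k)%:C * (c t k)%:C).
transitivity (\sum_k \sum_j \sum_t F t j k).
  rewrite mulr_sumr; apply: eq_bigr => k _.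
  rewrite (_ : lam * _ = (d k)%:C * (v 0 k)^*%R * (lam * v 0 k)); last by ring.
  rewrite -Av mulr_sumr; apply: eq_bigr => j _.
  rewrite mxE rmorphM rmorph_sum !mulr_sumr; apply: eq_bigr => t _.
  by rewrite /F !rmorphM; ring.
rewrite exchange_big; under eq_bigr => j _ do rewrite exchange_big.
rewrite exchange_big; apply: eq_bigr => t _.
rewrite rmorph_sum mulr_suml mulr_sumr; apply: eq_bigr => j _.
rewrite !mulr_sumr; apply: eq_bigr => k _.
by rewrite /F !rmorphM /= !conjC_real_complex; ring.
Qed.

Hypotheses (d_gt0 : forall j, 0 < d j) (w_ge0 : forall t, 0 <= w t).

Lemma scaled_gram_eigenvalue_ge0 lam : eigenvalue (cmx scaled_gram) lam -> 0 <= lam.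
Proof.
case/eigenvalueP => v /scaled_gram_left_eigen_quadratic quad /rV0Pn [k0 vk0_neq0].
set S := \sum_k _ in quad; set Q := \sum_t _ in quad.
have S_gt0 : 0 < S.
  rewrite /S (bigD1 k0) //= ltr_wpDr ?sumr_ge0 // => [k _|].
    by rewrite mulr_ge0 ?ler0c ?mul_conjC_ge0 // ltW.
  by rewrite mulr_gt0 ?ltcR ?mul_conjC_gt0.
have Q_ge0 : 0 <= Q.
  by rewrite sumr_ge0 // => t _; rewrite mulr_ge0 ?ler0c ?mul_conjC_ge0.
have -> : lam = Q / S by rewrite -quad mulfK // gt_eqF.
by rewrite divr_ge0 // ltW.
Qed.

Lemma scaled_gram_eigenvalue0_kernel : eigenvalue (cmx scaled_gram) 0 ->
  exists2 u : 'rV[R[i]]_n,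
    u != 0 & forall t, w t != 0 -> \sum_j u 0 j * (c t j)%:C = 0.
Proof.
case/eigenvalueP => v /scaled_gram_left_eigen_quadratic quad /rV0Pn [k0 vk0_neq0].
exists (\row_j (v 0 j * (d j)%:C)).
  apply/rV0Pn; exists k0; rewrite mxE mulf_neq0 //.
  by rewrite fmorph_eq0 gt_eqF.
move=> t wt_neq0; rewrite mul0r in quad.
have term_ge0 t' : 0 <= (w t')%:C * (vdc v t' * (vdc v t')^*%R).
  by rewrite mulr_ge0 ?ler0c ?mul_conjC_ge0.
have /eqP := psumr_eq0P (fun t' _ => term_ge0 t') (esym quad) (i := t) isT.
rewrite mulf_eq0 mul_conjC_eq0 fmorph_eq0 (negbTE wt_neq0) /= => /eqP.
by move=> vdc0; rewrite -[RHS]vdc0; apply: eq_bigr => j _; rewrite mxE.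
Qed.

End ScaledGram.

Section Likelihood.
Variables (R : rcfType) (K I M : nat).
Variables (p : 'I_K -> 'I_I -> 'I_M -> R) (x : 'I_I -> 'I_M -> nat) (q : 'cV[R]_K).
Implicit Type t : 'I_I * 'I_M.

Let pc t k := p k t.1 t.2.
Let inn t := inner q (pcol p t.1 t.2).
Let weight t := (2 * M%:R)^-1 * ((x t.1 t.2)%:R / inn t ^+ 2).

Lemma inner_pcolE t : inn t = \sum_k q k 0 * pc t k.
Proof. by apply: eq_bigr => k _; rewrite mxE. Qed.

Lemma grad_ellE k :
  grad_ell p q x k 0 = \sum_t weight t * (\sum_j q j 0 * pc t j) * pc t k.
Proof.
rewrite /grad_ell !mxE summxE.
under eq_bigr => m _ do rewrite summxE.
rewrite exchange_big pair_bigA mulr_sumr; apply: eq_bigr => -[i m] _.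
rewrite !mxE -inner_pcolE /weight /inn /=.
have [->|inn_neq0] := eqVneq (inner q (pcol p i m)) 0.
  by rewrite !(expr0n, invr0, mulr0, mul0r).
by rewrite /pc expr2 !invfM !mulrA mulfVK.
Qed.

Lemma BmatE : Bmat p q x = scaled_gram (fun j => q j 0) weight pc.
Proof.
apply/matrixP => j k.
rewrite /Bmat /hess_ell mulmxN opprK mul_diag_mx !mxE summxE; congr (_ * _).
under eq_bigr => m _ do rewrite summxE.
rewrite exchange_big pair_bigA mulr_sumr; apply: eq_bigr => -[i m] _.
by rewrite !mxE big_ord1 !mxE mulrA.
Qed.

Lemma Bmat_colsum k : \sum_j Bmat p q x j k = grad_ell p q x k 0.
Proof. by rewrite BmatE scaled_gram_colsum grad_ellE. Qed.

Lemma Bmat_mulq : Bmat p q x *m q = \col_j (q j 0 * grad_ell p q x j 0).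
Proof.
apply/colP => j; rewrite [LHS]mxE [RHS]mxE BmatE grad_ellE.
exact: scaled_gram_mul_d.
Qed.

Lemma weight_ge0 t : 0 <= weight t.
Proof. by rewrite /weight mulr_ge0 ?invr_ge0 ?mulr_ge0 ?ler0n // invr_ge0 sqr_ge0. Qed.

Hypotheses (p_ge0 : forall k i m, 0 <= p k i m) (q_gt0 : forall k, 0 < q k 0).
Hypotheses (A1 : assumption_A1 p x) (A2 : assumption_A2 p x).
Hypothesis grad_ell1 : grad_ell p q x = const_mx 1.

Lemma Bmat_ge0 j k : 0 <= Bmat p q x j k.
Proof.
rewrite BmatE scaled_gram_ge0 // => [j'|t|t k'].
- exact: ltW.
- exact: weight_ge0.
- exact: p_ge0.
Qed.

Lemma Bmat_colsum1 k : \sum_j Bmat p q x j k = 1.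
Proof. by rewrite Bmat_colsum grad_ell1 mxE. Qed.

Lemma weight_neq0 t : (0 < x t.1 t.2)%N -> weight t != 0.
Proof.
move=> x_gt0; have [k pk_gt0] := A1 x_gt0.
have inn_gt0 : 0 < inn t.
  rewrite inner_pcolE (bigD1 k) //= ltr_pwDl ?mulr_gt0 ?q_gt0 //.
  by rewrite sumr_ge0 // => j _; rewrite mulr_ge0 ?p_ge0 // ltW ?q_gt0.
have M_gt0 : (0 < M)%N by apply: leq_ltn_trans (ltn_ord t.2).
by rewrite !mulf_neq0 ?invr_eq0 ?mulf_neq0 ?pnatr_eq0 ?expf_neq0 -?lt0n ?gt_eqF.
Qed.

(* (A2) transfers to complex vectors through their real and imaginary parts. *)
Lemma A2_complex (u : 'rV[R[i]]_K) : \sum_k u 0 k = 0 ->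
  (forall i m, (0 < x i m)%N -> \sum_k u 0 k * (p k i m)%:C = 0) -> u = 0.
Proof.
move=> u_sum0 u_ker.
have real_ker (s : 'cV[R]_K) : \sum_k s k 0 = 0 ->
    (forall i m, (0 < x i m)%N -> inner s (pcol p i m) = 0) -> s = 0.
  move=> s_sum0 s_ker; apply/eqP; apply: contraT => s_neq0.
  by have [i [m [/s_ker ->]]] := A2 s_neq0 s_sum0; rewrite eqxx.
have Re_u0 : \col_k complex.Re (u 0 k) = 0.
  apply: real_ker => [|i m x_gt0].
    by under eq_bigr do rewrite mxE; rewrite -(@raddf_sum _ _ (@complex.Re R)) u_sum0.
  by rewrite /inner; under eq_bigr do rewrite !mxE; rewrite -Re_sum_mul_real u_ker.
have Im_u0 : \col_k complex.Im (u 0 k) = 0.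
  apply: real_ker => [|i m x_gt0].
    by under eq_bigr do rewrite mxE; rewrite -(@raddf_sum _ _ (@complex.Im R)) u_sum0.
  by rewrite /inner; under eq_bigr do rewrite !mxE; rewrite -Im_sum_mul_real u_ker.
apply/rowP => k; move/colP: Re_u0 => /(_ k); move/colP: Im_u0 => /(_ k).
by rewrite !mxE; case: (u 0 k) => a b /= -> ->.
Qed.

Lemma Bmat_eigenvalue_neq0 : ~~ eigenvalue (cmx (Bmat p q x)) 0.
Proof.
rewrite BmatE; apply/negP.
case/(scaled_gram_eigenvalue0_kernel q_gt0 weight_ge0) => u u_neq0 u_ker.
suff u_sum0 : \sum_k u 0 k = 0.
  move: u_neq0; rewrite (A2_complex u_sum0) ?eqxx // => i m x_gt0.
  exact: (u_ker (i, m) (@weight_neq0 (i, m) x_gt0)).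
transitivity (\sum_k u 0 k * (grad_ell p q x k 0)%:C).
  by apply: eq_bigr => k _; rewrite grad_ell1 mxE mulr1.
under eq_bigr do rewrite grad_ellE rmorph_sum mulr_sumr.
rewrite exchange_big big1 // => t _.
have [w0|w_neq0] := eqVneq (weight t) 0.
  by rewrite big1 // => k _; rewrite w0 !mul0r mulr0.
transitivity ((weight t * \sum_j q j 0 * pc t j)%:C * \sum_k u 0 k * (pc t k)%:C).
  by rewrite mulr_sumr; apply: eq_bigr => k _; rewrite !rmorphM; ring.
by rewrite u_ker // mulr0.
Qed.

Lemma Bmat_eigenvalue lam : eigenvalue (cmx (Bmat p q x)) lam ->
  [/\ lam \is Num.real, 0 < lam & lam <= 1].
Proof.
move=> eig_lam.
have lam_ge0 : 0 <= lam.
  move: eig_lam; rewrite BmatE; exact: (scaled_gram_eigenvalue_ge0 (c := pc) q_gt0 weight_ge0).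
have lam_neq0 : lam != 0 by apply: contraNneq Bmat_eigenvalue_neq0 => <-.
have := eigenvalue_cmx_norm_le1 Bmat_ge0 Bmat_colsum1 eig_lam.
by rewrite ger0_norm // => lam_le1; rewrite ger0_real // lt_def lam_neq0.
Qed.

Lemma jac_LE : jac_L p q x = 1%:M - Bmat p q x.
Proof. by rewrite /jac_L /Bmat grad_ell1 trmx_const diag_const_mx opprK. Qed.

Lemma jac_L_eigenvalue lam : eigenvalue (cmx (jac_L p q x)) lam ->
  [/\ lam \is Num.real, 0 <= lam & lam < 1].
Proof.
rewrite jac_LE => /eigenvalue_cmx_1subr /Bmat_eigenvalue[lam'_real lam'_gt0 lam'_le1].
rewrite -[lam](subKr 1) rpredB ?rpred1 // subr_ge0 lam'_le1.
by rewrite ltrBlDr ltrDl.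
Qed.

End Likelihood.

Theorem mainTheorem5 (R : rcfType) (K I M : nat)
  (p : 'I_K -> 'I_I -> 'I_M -> R) (x : 'I_I -> 'I_M -> nat) (q : 'cV[R]_K) :
  is_stoch_p p -> is_genotype x ->
  assumption_A1 p x -> assumption_A2 p x ->
  in_open_simplex q ->
  grad_ell p q x = const_mx 1 ->
  ([/\ (forall j k, 0 <= Bmat p q x j k),
      (const_mx 1 : 'rV[R]_K) *m Bmat p q x = const_mx 1,
      Bmat p q x *m q = q &
      (forall lam : R[i], eigenvalue (cmx (Bmat p q x)) lam ->
          [/\ lam \is Num.real, 0 < lam & lam <= 1])]
  /\ (jac_L p q x = 1%:M - Bmat p q x /\
      (forall lam : R[i], eigenvalue (cmx (jac_L p q x)) lam ->
          [/\ lam \is Num.real, 0 <= lam & lam < 1]))).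
Proof.
move=> [p_ge0 _] _ A1 A2 [q_gt0 _] grad_ell1.
split; first split.
- exact: Bmat_ge0.
- apply/rowP => k; rewrite !mxE -[RHS](Bmat_colsum1 grad_ell1 k).
  by apply: eq_bigr => j _; rewrite mxE mul1r.
- by rewrite Bmat_mulq; apply/colP => j; rewrite mxE grad_ell1 mxE mulr1.
- exact: Bmat_eigenvalue.
split; first exact: jac_LE.
exact: jac_L_eigenvalue.
Qed.
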